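(* Let $\vartheta$ be a recognisable random substitution on $\mathcal A$. Then the map assigning to $y\in X_\vartheta$ its recognisability data $(x,k,(v_i)_{i\in\mathbb Z})$ is continuous, where $x\in X_\vartheta\subset\mathcal A^{\mathbb Z}$, $k\in\mathbb N_0$ and $(v_i)_{i\in\mathbb Z}\in(\mathcal A^+)^{\mathbb Z}$ carry the product of discrete topologies.
   Context: A random substitution $\vartheta$ on a finite alphabet $\mathcal A$ maps each letter to a non-empty finite set of non-empty words, extended to words by $\vartheta(u_1\cdots u_n)=\{w_1\cdots w_n:w_i\in\vartheta(u_i)\}$; $\vartheta^n$ is the $n$-fold composition. $X_\vartheta$ is the set of $x\in\mathcal A^{\mathbb Z}$ all of whose finite subwords are subwords of some word in some $\vartheta^n(a)$, with the product topology and left shift $S$. $\vartheta$ is recognisable if for every $y\in X_\vartheta$ there exist a unique $x\in X_\vartheta$, a unique sequence $(v_i)_{i\in\mathbb Z}$ with $v_i\in\vartheta(x_i)$, and a unique $0\le k<|v_0|$ such that $S^{-k}y=\cdots v_{-2}v_{-1}.v_0v_1\cdots$ (the bi-infinite concatenation with $v_0$ starting at position $0$); the triple $(x,k,(v_i)_{i\in\mathbb Z})$ is the recognisability data of $y$. *)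

From HB Require Import structures.
From mathcomp Require Import all_boot all_order all_algebra.
From mathcomp Require Import all_classical all_reals all_analysis.

Set Implicit Arguments.
Unset Strict Implicit.
Unset Printing Implicit Defensive.

Import Order.TTheory GRing.Theory Num.Theory.
Local Open Scope ring_scope.

(** A random substitution on a finite alphabet [A] is given by
    [theta : A -> seq (seq A)], the list enumerating the finite set
    [theta a] of words (duplicates are irrelevant). *)
Definition is_random_subst (A : finType) (theta : A -> seq (seq A)) : Prop :=
  (forall a, theta a != [::]) /\ (forall a w, w \in theta a -> w != [::]).

Fixpoint subst_word (A : finType) (theta : A -> seq (seq A)) (u : seq A)
  (w : seq A) : Prop :=
  match u with
  | [::] => w = [::]
  | a :: u' => exists v w', [/\ v \in theta a, subst_word theta u' w' & w = v ++ w']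
  end.

Fixpoint subst_iter (A : finType) (theta : A -> seq (seq A)) (n : nat)
  (u w : seq A) : Prop :=
  match n with
  | 0 => w = u
  | n'.+1 => exists u', subst_iter theta n' u u' /\ subst_word theta u' w
  end.

Definition legal (A : finType) (theta : A -> seq (seq A)) (w : seq A) : Prop :=
  exists (n : nat) (a : A) (u : seq A), subst_iter theta n [:: a] u /\ infix w u.

Definition subword (A : Type) (x : int -> A) (m : int) (len : nat) : seq A :=
  mkseq (fun j => x (m + j%:Z)) len.

Definition Xsub (A : finType) (theta : A -> seq (seq A)) : set (int -> A) :=
  [set x | forall (m : int) (len : nat), legal theta (subword x m len)].

(** [concat_at v z] : [z = ... v_{-2} v_{-1} . v_0 v_1 ...] with [v_0]
    starting at position 0; [p i] is the starting position of [v_i]. *)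
Definition concat_at (A : Type) (v : int -> seq A) (z : int -> A) : Prop :=
  exists p : int -> int,
    [/\ p 0 = 0,
        forall i, p (i + 1) = p i + (size (v i))%:Z &
        forall i (j : nat), (j < size (v i))%N -> z (p i + j%:Z) = nth (z 0) (v i) j].

(** [(x, k, v)] is recognisability data for [y] (not yet asserting uniqueness):
    [x \in X_theta], [v_i \in theta(x_i)], [0 <= k < |v_0|] and
    [S^{-k} y = ... v_{-1} . v_0 v_1 ...], where [(S^{-k} y)_n = y_{n-k}]. *)
Definition is_recog_data (A : finType) (theta : A -> seq (seq A))
  (y : int -> A) (x : int -> A) (k : nat) (v : int -> seq A) : Prop :=
  [/\ Xsub theta x,
      forall i, v i \in theta (x i),
      (k < size (v 0))%N &
      concat_at v (fun n => y (n - k%:Z))].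

Definition recognisable (A : finType) (theta : A -> seq (seq A)) : Prop :=
  forall y, Xsub theta y ->
    exists x k v, is_recog_data theta y x k v /\
      forall x' k' v', is_recog_data theta y x' k' v' ->
        [/\ x' =1 x, k' = k & v' =1 v].

From HB Require Import structures.
From mathcomp Require Import all_boot all_order all_algebra.
From mathcomp Require Import all_classical all_reals all_analysis.
From mathcomp Require Import zify ring.

Set Implicit Arguments.
Unset Strict Implicit.
Unset Printing Implicit Defensive.

Import Order.TTheory GRing.Theory Num.Theory.
Local Open Scope classical_set_scope.

(* Failing to be recognisability data is witnessed by finitely many
   coordinates, so the set of triples (y, x, k, v) that are recognisability
   data is closed. The data of every point of X_theta lies in the compact set
   A^Z * [0, M) * W^Z, where W is the finite set of words of theta and M
   bounds their lengths. Hence, as y' tends to y in X_theta, every cluster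
   point of the data of y' is data for y, which by uniqueness is the data of
   y; a filter on a compact set with a single cluster point converges to
   it. *)

Lemma compact_cluster_cvg (T : topologicalType) (F : set_system T) (K : set T)
    (p : T) :
  ProperFilter F -> F K -> compact K -> cluster F `<=` [set p] -> F --> p.
Proof.
move=> PF FK cK clF U; rewrite nbhs_simpl nbhsE => -[B [oB Bp] BU].
apply: contrapT => nFU.
have nFB : ~ F B by move=> /(filterS BU).
pose H := within (~` B) F.
have PH : ProperFilter H.
  constructor; last exact: within_filter.
  rewrite /H /within /= => H0; apply: nFB; apply: filterS H0 => x /= h.
  by apply: contrapT => /h.
have HKB : H (K `&` ~` B) by apply: filterS FK => x Kx nBx.
have cKB : compact (K `&` ~` B) by apply: compact_closedI => //; exact: open_closedC.
have [z [[_ nBz] clHz]] := cKB H PH HKB.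
have /clF zp : cluster F z by apply: cvg_cluster clHz; exact: cvg_within.
by apply: nBz; rewrite zp.
Qed.

Definition agree (T : Type) (N : nat) (x x' : int -> T) :=
  forall l, (absz l <= N)%N -> x' l = x l.

Lemma agreeW (T : Type) (M N : nat) (x x' : int -> T) :
  (M <= N)%N -> agree N x x' -> agree M x x'.
Proof. by move=> MN xx' l hl; apply: xx'; lia. Qed.

Section PointwiseDiscrete.
Local Open Scope ring_scope.
Variable T : choiceType.

Lemma nbhs_ptws_coord (I : eqType) (g : {ptws I -> discrete_topology T}) (i : I) :
  nbhs g [set g' : {ptws I -> discrete_topology T} | g' i = g i].
Proof.
by apply: (@proj_continuous I (fun=> discrete_topology T) i g [set g i]); exact: discrete_set1.
Qed.

Lemma nbhs_ptws_agree (g : {ptws int -> discrete_topology T}) (N : nat) :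
  nbhs g [set g' : {ptws int -> discrete_topology T} | agree N g g'].
Proof.
elim: N => [|N IH].
  by apply: filterS (nbhs_ptws_coord g 0) => g' h l hl; rewrite (_ : l = 0) //; lia.
apply: filterS (filterI IH (filterI (nbhs_ptws_coord g N.+1%:Z)
                                     (nbhs_ptws_coord g (- N.+1%:Z))))
  => g' [gN [gpos gneg]] l hl.
have [/gN//|[->|->]//] : (absz l <= N)%N \/ l = N.+1%:Z \/ l = - N.+1%:Z by lia.
Qed.

Lemma ptws_discrete_compact (I : eqType) (W : set T) : finite_set W ->
  compact [set v : {ptws I -> discrete_topology T} | forall i, W (v i)].
Proof.
move=> fW.
by apply: (@tychonoff I (fun=> discrete_topology T) (fun=> W)) => _; exact: finite_compact.
Qed.

End PointwiseDiscrete.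

Section ConcatPositions.
Local Open Scope ring_scope.
Variable T : Type.
Implicit Types (v : int -> seq T) (z : int -> T).

(* The position of the first letter of [v i] in [... v_{-1} . v_0 v_1 ...];
   recall that [Negz n] is [- n.+1]. *)
Definition concat_pos v (i : int) : int :=
  match i with
  | Posz n => \sum_(j < n) (size (v j%:Z))%:Z
  | Negz n => - \sum_(j < n.+1) (size (v (Negz j)))%:Z
  end.

Lemma concat_pos0 v : concat_pos v 0 = 0.
Proof. by rewrite /= big_ord0. Qed.

Lemma concat_posS v i : concat_pos v (i + 1) = concat_pos v i + (size (v i))%:Z.
Proof.
case: i => n.
  by rewrite -[_ + 1]PoszD addn1 /= big_ord_recr.
case: n => [|m].
  by rewrite (_ : Negz 0 + 1 = 0) // concat_pos0 /= big_ord_recr big_ord0 /=; ring.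
have -> : Negz m.+1 + 1 = Negz m by lia.
by rewrite /= [in RHS]big_ord_recr /=; ring.
Qed.

Lemma concat_pos_unique v (p : int -> int) : p 0 = 0 ->
  (forall i, p (i + 1) = p i + (size (v i))%:Z) -> p =1 concat_pos v.
Proof.
move=> p0 pS; elim/int_ind => [|n IH|n IH]; first by rewrite p0 concat_pos0.
  by rewrite -addn1 PoszD pS concat_posS IH.
apply: (addIr (size (v (- n.+1%:Z)))%:Z).
by rewrite -pS -concat_posS (_ : - n.+1%:Z + 1 = - n%:Z) //; lia.
Qed.

Lemma concat_atE v z : concat_at v z <->
  (forall i (j : nat), (j < size (v i))%N ->
     z (concat_pos v i + j%:Z) = nth (z 0) (v i) j).
Proof.
split=> [[p [p0 pS hz]] i j hj|h].
  by rewrite -(concat_pos_unique p0 pS) hz.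
by exists (concat_pos v); split=> //; [exact: concat_pos0 | exact: concat_posS].
Qed.

Lemma concat_pos_agree v v' i : agree (absz i) v v' -> concat_pos v' i = concat_pos v i.
Proof.
case: i => n /= vv'.
  by apply: eq_bigr => j _; rewrite vv' //=; have := ltn_ord j; lia.
by congr (- _); apply: eq_bigr => j _; rewrite vv' //=; have := ltn_ord j; lia.
Qed.

End ConcatPositions.

Section Locality.
Local Open Scope ring_scope.
Variables (A : finType) (theta : A -> seq (seq A)).

Lemma subword_agree (x x' : int -> A) (m : int) (len : nat) :
  agree (absz m + len) x x' -> subword x' m len = subword x m len.
Proof.
move=> xx'; apply/eq_in_map => j; rewrite mem_iota add0n => hj.
by rewrite xx' //; lia.
Qed.

Lemma not_Xsub_local (x : int -> A) : ~ Xsub theta x ->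
  exists N, forall x', agree N x x' -> ~ Xsub theta x'.
Proof.
move=> /existsNP[m /existsNP[len nl]].
by exists (absz m + len)%N => x' xx' /(_ m len); rewrite (subword_agree xx').
Qed.

Lemma not_subst_local (x : int -> A) (v : int -> seq A) :
  ~ (forall i, v i \in theta (x i)) -> exists N, forall x' v',
    agree N x x' -> agree N v v' -> ~ (forall i, v' i \in theta (x' i)).
Proof.
move=> /existsNP[i niv].
by exists (absz i) => x' v' xx' vv' /(_ i); rewrite xx' ?vv'.
Qed.

Lemma not_concat_at_local (T : Type) (v : int -> seq T) (z : int -> T) :
  ~ concat_at v z -> exists N, forall v' z',
    agree N v v' -> agree N z z' -> ~ concat_at v' z'.
Proof.
rewrite concat_atE => /existsNP[i /existsNP[j /not_implyP[hj nz]]].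
exists (absz i + absz (concat_pos v i + j%:Z)%R)%N => v' z' vv' zz'.
rewrite concat_atE => /(_ i j).
rewrite (concat_pos_agree (agreeW _ vv')) ?vv' ?zz'; try lia.
by move=> /(_ hj) e; apply: nz; rewrite e; exact: set_nth_default.
Qed.

Lemma not_recog_data_local (y x : int -> A) (k : nat) (v : int -> seq A) :
  ~ is_recog_data theta y x k v -> exists N, forall y' x' v',
    agree N y y' -> agree N x x' -> agree N v v' -> ~ is_recog_data theta y' x' k v'.
Proof.
move=> nR.
have [Xx|/not_Xsub_local[N XN]] := pselect (Xsub theta x); last first.
  by exists N => y' x' v' _ /XN + _ [].
have [vx|/not_subst_local[N vN]] := pselect (forall i, v i \in theta (x i)); last first.
  by exists N => y' x' v' _ xx' vv' [_ /(vN _ _ xx' vv')].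
have [kv|nkv] := pselect (k < size (v 0))%N; last first.
  by exists 0%N => y' x' v' _ _ vv' [_ _]; rewrite vv'.
have /not_concat_at_local[N cN] : ~ concat_at v (fun n => y (n - k%:Z)).
  by move=> c; apply: nR.
exists (N + k)%N => y' x' v' yy' _ vv' [_ _ _]; apply: cN.
  by apply: agreeW vv'; lia.
by move=> l hl; apply: yy'; lia.
Qed.

End Locality.

Section RecognisabilityData.
Variables (A : finType) (theta : A -> seq (seq A)).

Local Notation shift_space := {ptws int -> discrete_topology A}.
Local Notation data_space := (shift_space * discrete_topology nat *
  {ptws int -> discrete_topology (seq A)})%type.

Definition subst_words : seq (seq A) := flatten [seq theta a | a <- enum A].

Lemma mem_subst_words a w : w \in theta a -> w \in subst_words.
Proof. by move=> wa; apply/flattenP; exists (theta a) => //; apply: map_f; exact: mem_enum. Qed.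

Definition recog_range : set data_space :=
  ([set: shift_space] `*` `I_(\max_(w <- subst_words) size w).+1) `*`
  [set v | forall i, v i \in subst_words].

Lemma compact_recog_range : compact recog_range.
Proof.
apply: compact_setX; first apply: compact_setX.
- rewrite (_ : setT = [set x : shift_space | forall i, [set: A] (x i)]).
    exact: ptws_discrete_compact finite_finset.
  by rewrite predeqE.
- exact: finite_compact (finite_II _).
- exact: ptws_discrete_compact (finite_seq _).
Qed.

Lemma recog_data_range y x k v :
  is_recog_data theta y x k v -> recog_range (x, k, v).
Proof.
move=> [_ vx kv _]; split=> [|i]; last exact: mem_subst_words (vx i).
split=> //=; apply: leq_trans kv _; apply: leqW.
exact: leq_bigmax_seq (mem_subst_words (vx 0)) _.
Qed.

Lemma recog_data_eq y x k v x' k' v' : recognisable theta -> Xsub theta y ->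
  is_recog_data theta y x k v -> is_recog_data theta y x' k' v' ->
  (x, k, v) = (x', k', v') :> data_space.
Proof.
move=> /(_ y) recog Xy R R'.
have [x0 [k0 [v0 [_ uniq]]]] := recog Xy.
have [ex -> ev] := uniq _ _ _ R; have [ex' -> ev'] := uniq _ _ _ R'.
by congr (_, _, _); apply: funext => i; rewrite ?ex ?ex' ?ev ?ev'.
Qed.

Lemma cluster_recog_data (f : shift_space -> data_space) (y : shift_space) :
  (forall y, Xsub theta y -> is_recog_data theta y (f y).1.1 (f y).1.2 (f y).2) ->
  cluster (f @ within (Xsub theta) (nbhs y)) `<=`
  [set c | is_recog_data theta y c.1.1 c.1.2 c.2].
Proof.
move=> hf c clc; apply: contrapT => /not_recog_data_local[N HN].
have [] := clc (f @` (Xsub theta `&` agree N y))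
  (([set x | agree N c.1.1 x] `*` [set c.1.2]) `*` [set v | agree N c.2 v]).
- by apply: filterS (nbhs_ptws_agree y N) => y' yy' Xy'; exists y'.
- exists ([set x | agree N c.1.1 x] `*` [set c.1.2], [set v | agree N c.2 v]) => //.
  split; last exact: nbhs_ptws_agree.
  exists ([set x | agree N c.1.1 x], [set c.1.2]) => //.
  by split; [exact: nbhs_ptws_agree | exact: discrete_set1].
- move=> _ [[y' [Xy' yy'] <-] [[xx' kk'] vv']].
  by apply: (HN y' _ _ yy' xx' vv'); rewrite -kk'; exact: hf.
Qed.

End RecognisabilityData.

Theorem mainTheorem6 (A : finType) (theta : A -> seq (seq A)) :
  is_random_subst theta -> recognisable theta ->
  forall f : {ptws int -> discrete_topology A} ->
             ({ptws int -> discrete_topology A} * discrete_topology nat *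
              {ptws int -> discrete_topology (seq A)}),
    (forall y, Xsub theta y -> is_recog_data theta y (f y).1.1 (f y).1.2 (f y).2) ->
    {within (Xsub theta : set {ptws int -> discrete_topology A}), continuous f}.
Proof.
(* Continuity does not use that the sets theta a and their words are non-empty. *)
move=> _ recog f hf; apply/subspace_continuousP => y Xy.
set F := within _ (nbhs y).
have PF : ProperFilter F.
  by apply: within_nbhs_proper; apply: inferP; exact: subset_closure.
apply: (@compact_cluster_cvg _ (f @ F) (recog_range theta)).
- by apply: nearW => y' Xy'; exact: recog_data_range (hf y' Xy').
- exact: compact_recog_range.
- move=> c /(cluster_recog_data hf) /= Rc; rewrite /from_subspace /=.
  have := recog_data_eq recog Xy Rc (hf y Xy).
  by case: c {Rc} => [[? ?] ?]; case: (f y) => [[? ?] ?].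
Qed.
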